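(* Let $p=3$. Let $\tau_1=(\tau_1(i))_{1\le i\le 4}$ be an assigned family of four abelian type invariants (types of finite abelian $3$-groups). Then the set $\mathrm{Cnt}_3^2((1^2),\tau_1)$ of isomorphism classes of finite metabelian $3$-groups $\mathfrak{M}$ such that $\mathfrak{M}/\mathfrak{M}'$ is of type $(1^2)$, i.e. $\mathfrak{M}/\mathfrak{M}'\simeq C_3\times C_3$, and $\tau_1\mathfrak{M}=(H/H')_{H\in\mathrm{Lyr}_1\mathfrak{M}}\simeq\tau_1$ (as families of abelian type invariants, up to reordering) is finite.
   Context: For a finite $p$-group (or pro-$p$ group) $G$ with $G/G'$ finite and $n\ge 0$, $\mathrm{Lyr}_n G$ denotes the set of subgroups $H$ with $G'\le H\le G$ and $(G:H)=p^n$. For $G/G'$ of type $(p,p)$, $\mathrm{Lyr}_1 G$ consists of the $p+1$ maximal subgroups of $G$. Abelian type invariants are written in logarithmic notation: a type $(a_1,a_2,\dots)$ with $a_1\ge a_2\ge\dots$ stands for $C_{p^{a_1}}\times C_{p^{a_2}}\times\cdots$, e.g. $21$ means $C_9\times C_3$, $1^2$ means $C_3\times C_3$, $1^3$ means $C_3^3$; an exponent on a parenthesized type such as $(21)^3$ denotes that many repeated components. *)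

From mathcomp Require Import all_boot all_fingroup all_solvable.
Set Implicit Arguments. Unset Strict Implicit. Unset Printing Implicit Defensive.
Local Open Scope group_scope.

(* Abelian type invariant in logarithmic notation, e.g. [:: 2; 1] = C_9 x C_3. *)
Definition log_abelian_type (p : nat) (gT : finGroupType) (A : {set gT}) : seq nat :=
  map (logn p) (abelian_type A).

Definition Lyr (p n : nat) (gT : finGroupType) (G : {group gT}) : {set {group gT}} :=
  [set H : {group gT} | [&& G^`(1) \subset H, H \subset G & #|G : H| == (p ^ n)%N]].

(* tau_1 G ~ tau (as families, up to reordering): for every type t, the number
   of H in Lyr_1 G with H/H' of type t equals the multiplicity of t in tau. *)
Definition tau1_matches (p : nat) (gT : finGroupType) (G : {group gT})
    (tau : 4.-tuple (seq nat)) : Prop :=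
  forall t : seq nat,
    #|[set H in Lyr p 1 G | log_abelian_type p (H / H^`(1)) == t]| = count_mem t tau.

Definition in_Cnt (p : nat) (tau : 4.-tuple (seq nat)) (gT : finGroupType) (G : {group gT}) : Prop :=
  [/\ p.-group G, G^`(2) = 1,
      log_abelian_type p (G / G^`(1)) = [:: 1%N; 1%N] & tau1_matches p G tau].

From mathcomp Require Import all_boot all_algebra all_fingroup all_solvable.
Set Implicit Arguments. Unset Strict Implicit. Unset Printing Implicit Defensive.
Import GRing.Theory.

(* Let M = G', which is abelian, and let x, y generate G modulo M.  As G/M has
   exponent 3, in Z[G/M] acting on M one has
     (xy - 1)(xy^2 - 1) = (1 + x + x^2) - x (1 + y + y^2),
   which is killed by (x - 1)(y - 1).  Hence the four commutator maps
   v |-> [v, g], g in {xy^2, xy, y, x}, compose to the trivial map on M, and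
   |M| is at most the product of their kernels C_M(g).  Each <g>M is a maximal
   subgroup H of G and |C_M(g)| <= |H : H'|, which is bounded in terms of tau.
   So |G| is bounded, and groups of bounded order have finitely many
   isomorphism types, each realised by a subgroup of a symmetric group. *)

Local Open Scope group_scope.

Lemma card_le_ker_morphim (aT rT : finGroupType) (D B : {group aT})
    (f : {morphism D >-> rT}) :
  B \subset D -> (#|B| <= #|'ker_D f| * #|f @* B|)%N.
Proof.
move=> sBD; rewrite card_morphim (setIidPr sBD) -indexgI -(Lagrange (subsetIl B ('ker f))).
by rewrite leq_mul2r subset_leq_card ?orbT // setSI.
Qed.

Section CommutatorsOnAbelianSubgroup.

Variables (gT : finGroupType) (G M : {group gT}).
Hypotheses (nMG : G \subset 'N(M)) (sG'M : [~: G, G] \subset M) (cMM : abelian M).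

Lemma memJ_sub v g : v \in M -> g \in G -> v ^ g \in M.
Proof. by move=> Mv Gg; rewrite memJ_norm // (subsetP nMG). Qed.

Lemma mem_commg_sub v g : v \in M -> g \in G -> [~ v, g] \in M.
Proof. by move=> Mv Gg; rewrite commgEl groupM ?groupV ?memJ_sub. Qed.

Lemma conjg_fix_sub v c : v \in M -> c \in M -> v ^ c = v.
Proof. by move=> Mv Mc; apply/conjg_fixP/commgP/(centsP cMM). Qed.

Lemma conjgMC v g h : v \in M -> g \in G -> h \in G -> v ^ (g * h) = v ^ (h * g).
Proof.
move=> Mv Gg Gh; rewrite (commgC g h) conjgM; apply: conjg_fix_sub.
  by rewrite memJ_sub ?groupM.
exact: (subsetP sG'M) (mem_commg Gg Gh).
Qed.

Section ModuleView.

Import FiniteModule.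
Local Notation V := (fmod_of cMM).

Lemma actrC (u : V) g h : g \in G -> h \in G -> (u ^@ g ^@ h = u ^@ h ^@ g)%R.
Proof.
move=> Gg Gh; have nMg := subsetP nMG; rewrite -!actrM ?nMg //; apply: val_inj.
by rewrite !fmvalJ ?groupM ?nMg // conjgMC // fmodP.
Qed.

Lemma actr_cube (u : V) g : g \in G -> g ^+ 3 \in M -> (u ^@ g ^@ g ^@ g = u)%R.
Proof.
move=> Gg Mg3; have nMg := subsetP nMG; rewrite -!actrM ?groupM ?nMg //.
by apply: val_inj; rewrite fmvalJ ?groupM ?nMg // -expg2 -expgS conjg_fix_sub ?fmodP.
Qed.

Local Open Scope ring_scope.

Definition delta g (u : V) := u ^@ g - u.
Definition norm3 g (u : V) := u + u ^@ g + u ^@ g ^@ g.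

Lemma deltaB g : {morph delta g : a b / a - b}.
Proof. by move=> a b; rewrite /delta actAr actNr !opprD addrACA. Qed.

Lemma delta0 g : delta g 0 = 0.
Proof. by rewrite /delta act0r subrr. Qed.

Lemma deltaJ g h (u : V) : g \in G -> h \in G -> delta g (u ^@ h) = delta g u ^@ h.
Proof. by move=> Gg Gh; rewrite /delta actAr actNr actrC. Qed.

Lemma deltaC g h (u : V) :
  g \in G -> h \in G -> delta g (delta h u) = delta h (delta g u).
Proof. by move=> Gg Gh; rewrite deltaB deltaJ // [delta h _]deltaB deltaJ. Qed.

Lemma delta_norm3 g (u : V) : g \in G -> (g ^+ 3)%g \in M -> delta g (norm3 g u) = 0.
Proof.
move=> Gg Mg3; apply/eqP; rewrite /delta /norm3 !actAr actr_cube // subr_eq0.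
by rewrite addrC addrA.
Qed.

Lemma delta_mul_mulX2 (u : V) x y : x \in G -> y \in G -> (y ^+ 3)%g \in M ->
  delta (x * y) (delta (x * y ^+ 2) u) = norm3 x u - norm3 y u ^@ x.
Proof.
move=> Gx Gy My3; have nMg := subsetP nMG.
rewrite /delta /norm3 expg2 !actAr !actNr !actrM ?groupM ?nMg //.
rewrite (actrC (u ^@ x ^@ y) Gy Gx) (actrC (u ^@ x) Gy Gx) actr_cube //.
rewrite (actrC u Gy Gx) (actrC (u ^@ y) Gy Gx) (actrC u Gy Gx).
set a := u ^@ x; set b := a ^@ y; set c := b ^@ y; set d := a ^@ x.
by rewrite opprB !opprD !addrA (addrAC u a d) addrK (addrAC d (-b) u) (addrC d u).
Qed.

Lemma delta4_eq0 (u : V) x y :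
    x \in G -> y \in G -> (x ^+ 3)%g \in M -> (y ^+ 3)%g \in M ->
  delta x (delta y (delta (x * y) (delta (x * y ^+ 2) u))) = 0.
Proof.
move=> Gx Gy Mx3 My3; rewrite delta_mul_mulX2 // deltaB deltaJ // delta_norm3 //.
by rewrite act0r subr0 deltaC // delta_norm3 // delta0.
Qed.

Lemma fmod_commg v g : v \in M -> g \in G -> fmod cMM [~ v, g] = delta g (fmod cMM v).
Proof.
move=> Mv Gg; rewrite commgEl fmodM ?groupV ?memJ_sub // fmodV fmodJ ?(subsetP nMG) //.
by rewrite addrC.
Qed.

Lemma commg4_eq1 v x y :
    v \in M -> x \in G -> y \in G -> (x ^+ 3)%g \in M -> (y ^+ 3)%g \in M ->
  [~ v, x * y ^+ 2, x * y, y, x]%g = 1%g.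
Proof.
move=> Mv Gx Gy Mx3 My3; have Gxy2 : (x * y ^+ 2)%g \in G by rewrite groupM ?groupX.
have Mw : [~ v, x * y ^+ 2, x * y, y, x]%g \in M by rewrite !mem_commg_sub ?groupM.
by rewrite -(fmodK cMM Mw) !fmod_commg ?mem_commg_sub ?groupM // delta4_eq0.
Qed.

End ModuleView.

Section CommutatorMorphism.

Variable g : gT.
Hypothesis Gg : g \in G.

Definition commg_with (v : gT) := [~ v, g].

Lemma commg_with_morphM : {in M &, {morph commg_with : a b / a * b}}.
Proof.
move=> a b Ma Mb; rewrite /commg_with commMgJ conjg_fix_sub //.
exact: mem_commg_sub.
Qed.

Canonical commg_with_morphism := Morphism commg_with_morphM.

Lemma ker_commg_with : 'ker_M commg_with_morphism = 'C_M[g].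
Proof.
apply/setP=> v; rewrite in_setI [in RHS]in_setI cent1E; apply: andb_id2l => Mv.
by rewrite !inE Mv; apply/commgP/eqP.
Qed.

Lemma morphim_commg_with_sub B : commg_with_morphism @* B \subset M.
Proof.
rewrite morphimE; apply/subsetP=> _ /imsetP[v /setIP[Mv _] ->].
exact: mem_commg_sub.
Qed.

Lemma card_le_cent1_morphim (B : {group gT}) : B \subset M ->
  (#|B| <= #|'C_M[g]| * #|commg_with_morphism @* B|)%N.
Proof. by move/(card_le_ker_morphim commg_with_morphism); rewrite ker_commg_with. Qed.

(* [M, g] is normal in H = <g>M with H / [M, g] abelian, so H' <= [M, g], while
   |C_M(g)| = |M : [M, g]| because v |-> [v, g] is an endomorphism of M. *)
Lemma card_cent1_le_index :
  (#|'C_M[g]| <= #|<[g]> <*> M : (<[g]> <*> M)^`(1)|)%N.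
Proof.
set H := (<[g]> <*> M)%G; set K := (commg_with_morphism @* M)%G.
have sKM : K \subset M := morphim_commg_with_sub M.
have nKM : M \subset 'N(K) by rewrite (subset_trans _ (cent_sub K)) // (centsS sKM).
have nKg : g \in 'N(K).
  apply/normP/eqP; rewrite eqEcard cardJg leqnn andbT /K /= morphimE setIid.
  apply/subsetP=> _ /imsetP[_ /imsetP[v Mv ->] ->].
  rewrite /commg_with conjRg {2}/conjg mulKg.
  by apply/imsetP; exists (v ^ g); rewrite ?memJ_sub.
have nKH : H \subset 'N(K) by rewrite join_subG cycle_subG nKg.
have cHK : abelian (H / K).
  rewrite quotientY ?cycle_subG // abelianY quotient_abelian ?cycle_abelian //.
  rewrite quotient_abelian //= quotient_cycle // centsC cycle_subG.
  rewrite -sub1set -quotient_set1 //; apply: quotient_cents2r.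
  rewrite gen_subG; apply/subsetP => _ /imset2P[_ v /set1P -> Mv ->].
  by rewrite -invgR groupV /K /= morphimE setIid; apply/imsetP; exists v.
have sH'K : H^`(1) \subset K := der1_min nKH cHK.
have cardM : #|M| = (#|'C_M[g]| * #|K|)%N.
  by rewrite -ker_commg_with card_morphim setIid -indexgI Lagrange ?subsetIl.
rewrite -(leq_pmul2r (cardG_gt0 K)) -cardM.
rewrite -(leq_pmul2r (cardG_gt0 H^`(1))) mulnAC [X in (_ <= X * _)%N]mulnC.
by rewrite Lagrange ?der_sub // leq_mul ?subset_leq_card ?joing_subr.
Qed.

End CommutatorMorphism.

Lemma card_le_prod_cent1 x y : x \in G -> y \in G -> x ^+ 3 \in M -> y ^+ 3 \in M ->
  (#|M| <= #|'C_M[x * y ^+ 2]| * #|'C_M[x * y]| * #|'C_M[y]| * #|'C_M[x]|)%N.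
Proof.
move=> Gx Gy Mx3 My3.
have Gxy : x * y \in G by rewrite groupM.
have Gxy2 : x * y ^+ 2 \in G by rewrite groupM ?groupX.
pose f1 := commg_with_morphism Gxy2; pose f2 := commg_with_morphism Gxy.
pose f3 := commg_with_morphism Gy; pose f4 := commg_with_morphism Gx.
have im4_le1 : (#|f4 @* (f3 @* (f2 @* (f1 @* M)))| <= 1)%N.
  rewrite -(cards1 (1 : gT)) subset_leq_card //; apply/subsetP=> z.
  rewrite morphimE => /imsetP[w3 /setIP[_]]; rewrite morphimE => /imsetP[w2 /setIP[_]].
  rewrite morphimE => /imsetP[w1 /setIP[_]]; rewrite morphimE => /imsetP[v /setIP[Mv _]].
  move=> -> -> -> ->.
  by rewrite /= /commg_with commg4_eq1 ?inE.
have le := card_le_cent1_morphim; have sM := morphim_commg_with_sub.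
rewrite -!mulnA; apply: leq_trans (le _ Gxy2 _ (subxx M)) _; rewrite leq_mul //.
apply: leq_trans (le _ Gxy _ (sM _ _ _)) _; rewrite leq_mul //.
apply: leq_trans (le _ Gy _ (sM _ _ _)) _; rewrite leq_mul //.
apply: leq_trans (le _ Gx _ (sM _ _ _)) _.
by rewrite -[X in (_ <= X)%N]muln1 leq_mul.
Qed.

End CommutatorsOnAbelianSubgroup.

Lemma logn_prod (p : nat) (s : seq nat) : all (leq 1) s ->
  logn p (\prod_(m <- s) m) = \sum_(m <- s) logn p m.
Proof.
elim: s => [|m s IHs] /=; first by rewrite !big_nil logn1.
case/andP=> m_gt0 s_gt0; rewrite !big_cons lognM ?IHs //.
by rewrite big_seq prodn_cond_gt0 // => i /(allP s_gt0).
Qed.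

Lemma card_abelian_type (gT : finGroupType) (A : {group gT}) :
  abelian A -> #|A| = (\prod_(m <- abelian_type A) m)%N.
Proof.
case/abelian_structure=> b defA <-; rewrite -(bigdprod_card defA) big_map.
by apply: eq_bigr => x _; rewrite -orderE.
Qed.

Lemma card_log_abelian_type (p : nat) (gT : finGroupType) (A : {group gT}) :
  abelian A -> p.-group A -> #|A| = (p ^ sumn (log_abelian_type p A))%N.
Proof.
move=> cAA pA; rewrite {1}(card_pgroup pA) (card_abelian_type cAA) logn_prod.
  by rewrite sumnE big_map.
by apply/allP=> m /(allP (abelian_type_gt1 A)) /ltnW.
Qed.

Lemma abelian_type_head (gT : finGroupType) (A : {group gT}) e t :
  abelian_type A = e :: t -> e = exponent A.
Proof.
rewrite /abelian_type genGidG; case: #|A| => //= n.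
by case: ifP => // _ [].
Qed.

Lemma log_abelian_type_11 (p : nat) (gT : finGroupType) (A : {group gT}) :
    abelian A -> p.-group A -> log_abelian_type p A = [:: 1; 1]%N ->
  #|A| = (p ^ 2)%N /\ exponent A = p.
Proof.
move=> cAA pA tA; split; first by rewrite (card_log_abelian_type cAA pA) tA.
move: tA; rewrite /log_abelian_type; case tA: (abelian_type A) => [|e t] //= [le1 _].
rewrite (abelian_type_head tA) in le1.
by rewrite -(part_pnat_id (_ : p.-nat (exponent A))) ?pnat_exponent // p_part le1.
Qed.

Lemma leq_sum_mem (T : eqType) (s : seq T) (F : T -> nat) x :
  x \in s -> (F x <= \sum_(y <- s) F y)%N.
Proof.
elim: s => //= y s IHs; rewrite in_cons big_cons => /orP[/eqP-> | /IHs].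
  exact: leq_addr.
by move/leq_trans; apply; apply: leq_addl.
Qed.

Definition tau_weight (tau : 4.-tuple (seq nat)) := (\sum_(t <- tau) sumn t)%N.

Section CntBound.

Variables (tau : 4.-tuple (seq nat)) (gT : finGroupType) (G : {group gT}).
Hypothesis CntG : in_Cnt 3 tau G.

Lemma Cnt_abelian_der1 : abelian G^`(1).
Proof. by have [_ G''1 _ _] := CntG; apply/derG1P. Qed.

Lemma Cnt_der1_quotient : #|G : G^`(1)| = 9%N /\ exponent (G / G^`(1)) = 3%N.
Proof.
have [pG _ tG _] := CntG.
have [cardQ ->] := log_abelian_type_11 (der_abelian 0 G) (quotient_pgroup _ pG) tG.
by rewrite -card_quotient ?der_norm // cardQ.
Qed.

Lemma Cnt_expg3 g : g \in G -> g ^+ 3 \in G^`(1).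
Proof.
move=> Gg; have nG'g := subsetP (der_norm 1 G) g Gg.
apply: coset_idr; first by rewrite groupX.
by rewrite morphX // -(proj2 Cnt_der1_quotient) expg_exponent ?mem_quotient.
Qed.

Lemma Cnt_index_joing g : g \in G -> g \notin G^`(1) ->
  #|G : <[g]> <*> G^`(1)| = 3%N.
Proof.
move=> Gg G'g; have nG'g := subsetP (der_norm 1 G) g Gg.
have sHG : <[g]> <*> G^`(1) \subset G by rewrite join_subG cycle_subG Gg der_sub.
have og : #[coset G^`(1) g] = 3%N.
  have : (#[coset G^`(1) g] %| 3)%N.
    by rewrite order_dvdn -morphX //= coset_id ?Cnt_expg3.
  rewrite dvdn_divisors // !inE orbC => /orP[/eqP // | ].
  by rewrite order_eq1 => /eqP/(coset_idr nG'g) G'g'; rewrite G'g' in G'g.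
have iHG' : #|<[g]> <*> G^`(1) : G^`(1)| = 3%N.
  rewrite -card_quotient ?join_subG ?cycle_subG ?nG'g ?normG //.
  by rewrite quotientYidr ?cycle_subG // quotient_cycle // -orderE og.
apply/eqP; rewrite -(eqn_pmul2r (_ : 0 < 3)%N) // -{1}iHG'.
by rewrite (Lagrange_index sHG (joing_subr _ _)) (proj1 Cnt_der1_quotient).
Qed.

Lemma Cnt_joing_Lyr1 g : g \in G -> g \notin G^`(1) ->
  (<[g]> <*> G^`(1))%G \in Lyr 3 1 G.
Proof.
move=> Gg G'g; rewrite inE /= joing_subr join_subG cycle_subG Gg der_sub.
by rewrite Cnt_index_joing.
Qed.

Lemma Cnt_index_der1_Lyr1 (H : {group gT}) : H \in Lyr 3 1 G ->
  (#|H : H^`(1)| <= 3 ^ tau_weight tau)%N.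
Proof.
move=> LH; have [pG _ _ tauG] := CntG.
have sHG : H \subset G by move: LH; rewrite inE => /and3P[].
rewrite -card_quotient ?der_norm //.
rewrite (card_log_abelian_type (der_abelian 0 H) (quotient_pgroup _ (pgroupS sHG pG))).
rewrite leq_pexp2l // /tau_weight; apply: leq_sum_mem; rewrite -has_pred1 has_count -tauG.
by apply/card_gt0P; exists H; rewrite inE LH /=.
Qed.

Lemma Cnt_card_cent1 g : g \in G -> g \notin G^`(1) ->
  (#|'C_(G^`(1))[g]| <= 3 ^ tau_weight tau)%N.
Proof.
move=> Gg G'g; apply: leq_trans (Cnt_index_der1_Lyr1 (Cnt_joing_Lyr1 Gg G'g)).
exact: (card_cent1_le_index (der_norm 1 G) Cnt_abelian_der1 Gg).
Qed.

Lemma card_Cnt : (#|G| <= 9 * (3 ^ tau_weight tau) ^ 4)%N.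
Proof.
have [iG' _] := Cnt_der1_quotient.
have [x Gx G'x] : exists2 x, x \in G & x \notin G^`(1).
  by apply/subsetPn; rewrite -indexg_eq1 iG'.
set H := (<[x]> <*> G^`(1))%G.
have [y Gy Hy] : exists2 y, y \in G & y \notin H.
  by apply/subsetPn; rewrite -indexg_eq1 Cnt_index_joing.
have sG'H : G^`(1) \subset H := joing_subr _ _.
have Hx : x \in H := subsetP (joing_subl _ _) x (cycle_id x).
have G'y : y \notin G^`(1) by apply: contra Hy; apply: (subsetP sG'H).
have G'xy : x * y \notin G^`(1).
  apply: contra Hy => /(subsetP sG'H) Hxy.
  have -> : y = x^-1 * (x * y) by rewrite mulKg.
  by rewrite groupM ?groupV.
have G'xy2 : x * y ^+ 2 \notin G^`(1).
  apply: contra Hy => /(subsetP sG'H) Hxy2.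
  have Hy3 : y ^+ 3 \in H by rewrite (subsetP sG'H) ?Cnt_expg3.
  have -> : y = (x^-1 * (x * y ^+ 2))^-1 * y ^+ 3 by rewrite mulKg (expgSr y 2) mulKg.
  by rewrite groupM // groupV groupM // groupV.
rewrite -(Lagrange (der_sub 1 G)) iG' mulnC leq_mul2l /= !expnS expn0 muln1 !mulnA.
apply: leq_trans (card_le_prod_cent1 (der_norm 1 G) (subxx _) Cnt_abelian_der1
  Gx Gy (Cnt_expg3 Gx) (Cnt_expg3 Gy)) _.
have Gxy : x * y \in G by rewrite groupM.
have Gxy2 : x * y ^+ 2 \in G by rewrite groupM ?groupX.
by rewrite !leq_mul // Cnt_card_cent1.
Qed.

End CntBound.

Section RegularRepresentation.

Variable T : finGroupType.

Definition regular_fun (g : T) (i : 'I_#|T|) : 'I_#|T| := enum_rank (enum_val i * g).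

Lemma regular_fun_inj g : injective (regular_fun g).
Proof. by move=> i j /enum_rank_inj /mulIg /enum_val_inj. Qed.

Definition regular_perm (g : T) : {perm 'I_#|T|} := perm (@regular_fun_inj g).

Lemma regular_permM : {in [set: T] &, {morph regular_perm : a b / a * b}}.
Proof.
move=> a b _ _; apply/permP=> i.
by rewrite permM !permE /regular_fun enum_rankK mulgA.
Qed.

Canonical regular_morphism := Morphism regular_permM.

Lemma injm_regular : 'injm regular_morphism.
Proof.
apply/injmP=> a b _ _ /= /permP /(_ (enum_rank 1)).
by rewrite !permE /regular_fun !enum_rankK !mul1g => /enum_rank_inj.
Qed.

End RegularRepresentation.

Definition perm_group_rep (n k : nat) : {gT : finGroupType & {group gT}} :=
  existT (fun gT : finGroupType => {group gT}) (perm_of 'I_n)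
    (nth 1%G (enum {group {perm 'I_n}}) k).

Lemma isog_perm_group_rep (gT : finGroupType) (G : {group gT}) :
  exists n k, [/\ n = #|G|, k < #|{group {perm 'I_n}}|
                & G \isog projT2 (perm_group_rep n k)]%N.
Proof.
pose T := subg_of G; pose K := (regular_morphism T @* [set: T])%G.
pose s := enum {group {perm 'I_#|T|}}.
exists #|T|, (index K s); split.
- by rewrite -cardsT -(card_isog (isog_subg G)).
- by have := index_mem K s; rewrite mem_enum -cardE => ->.
rewrite /= nth_index ?mem_enum //.
exact: isog_trans (isog_subg G) (sub_isog (subxx _) (injm_regular T)).
Qed.

Lemma bounded_order_finite_isoclasses N :
  exists (n : nat) (reps : nat -> {gT : finGroupType & {group gT}}),
    forall (gT : finGroupType) (G : {group gT}),
      (#|G| <= N)%N -> exists2 i, (i < n)%N & G \isog projT2 (reps i).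
Proof.
pose B := (\max_(m < N.+1) #|{group {perm 'I_m}}|).+1.
exists (N.+1 * B)%N, (fun i => perm_group_rep (i %/ B) (i %% B)) => gT G leGN.
have [m [k [-> ltkG isoG]]] := isog_perm_group_rep G.
have ltkB : (k < B)%N.
  rewrite ltnS (leq_trans (ltnW ltkG)) //.
  have ltGN : (#|G| < N.+1)%N by rewrite ltnS.
  exact: (@leq_bigmax _ (fun m : 'I_N.+1 => #|{group {perm 'I_m}}|) (Ordinal ltGN)).
exists (#|G| * B + k)%N.
  rewrite (leq_trans (_ : _ < #|G| * B + B)%N) ?ltn_add2l //.
  by rewrite -mulSnr leq_mul2r ltnS leGN orbT.
by rewrite divnMDl // divn_small // addn0 modnMDl modn_small.
Qed.

Theorem theorem5p2 (tau : 4.-tuple (seq nat)) :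
  exists (n : nat) (reps : nat -> {gT : finGroupType & {group gT}}),
    forall (gT : finGroupType) (G : {group gT}),
      in_Cnt 3 tau G ->
      exists2 i, (i < n)%N & (G \isog (projT2 (reps i)))%g.
Proof.
have [n [reps isoG]] := bounded_order_finite_isoclasses (9 * (3 ^ tau_weight tau) ^ 4).
by exists n, reps => gT G CntG; apply/isoG/card_Cnt.
Qed.
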